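(* Let $\nabla$ be a connection on an anchored vector bundle $(A,a_A)$ over $M$, let $[x,y]^\nabla=\nabla_xy-\nabla_yx$ and $R^\nabla(x,y)z=\nabla_x\nabla_yz-\nabla_y\nabla_xz-\nabla_{[x,y]^\nabla}z$. Then $(A,[\cdot,\cdot]^\nabla,a_A)$ is a Lie algebroid if and only if $$R^\nabla(x,y)z+R^\nabla(y,z)x+R^\nabla(z,x)y=0\quad\text{for all }x,y,z\in\Gamma(A).$$
   Context: A connection on the anchored bundle $(A,a_A)$ (with $a_A:A\to TM$ a bundle map) is an $\mathbb{R}$-bilinear operator $\nabla:\Gamma(A)\times\Gamma(A)\to\Gamma(A)$ with $\nabla_{fx}y=f\nabla_xy$ and $\nabla_x(fy)=a_A(x)(f)\,y+f\nabla_xy$. A Lie algebroid $(A,[\cdot,\cdot],a_A)$ is a skew-symmetric $\mathbb{R}$-bilinear bracket on $\Gamma(A)$ with $[x,fy]=f[x,y]+a_A(x)(f)y$ that satisfies the Jacobi identity. *)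

(* Algebraic (Lie–Rinehart style) rendering of an anchored
   vector bundle: K plays C^oo(M) (a commutative R-algebra), S plays Gamma(A)
   (a K-module), and the anchor sends a section to a derivation of K. *)
From HB Require Import structures.
From mathcomp Require Import all_boot all_order all_algebra.
From mathcomp Require Import reals.
Set Implicit Arguments. Unset Strict Implicit. Unset Printing Implicit Defensive.
Import GRing.Theory.
Local Open Scope ring_scope.

Section Defs.
Variables (R : realType) (K : comAlgType R) (S : lmodType K).

Definition rscale (c : R) (x : S) : S := (c%:A : K) *: x.

(* anchor a_A : A -> TM, a bundle map: C^oo(M)-linear in the section, and
   each a x is a vector field, i.e. an R-linear derivation of C^oo(M). *)
Definition is_anchor (a : S -> K -> K) : Prop :=
  (forall (f : K) (x y : S) (g : K), a (f *: x + y) g = f * a x g + a y g) /\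
  (forall (x : S) (c : R) (f g : K), a x (c *: f + g) = c *: a x f + a x g) /\
  (forall (x : S) (f g : K), a x (f * g) = f * a x g + g * a x f).

Definition rbilinear (op : S -> S -> S) : Prop :=
  (forall (c : R) (x y z : S), op (rscale c x + y) z = rscale c (op x z) + op y z) /\
  (forall (c : R) (x y z : S), op x (rscale c y + z) = rscale c (op x y) + op x z).

Definition is_connection (a : S -> K -> K) (nabla : S -> S -> S) : Prop :=
  rbilinear nabla /\
  (forall (f : K) (x y : S), nabla (f *: x) y = f *: nabla x y) /\
  (forall (f : K) (x y : S), nabla x (f *: y) = a x f *: y + f *: nabla x y).

Definition is_lie_algebroid (br : S -> S -> S) (a : S -> K -> K) : Prop :=
  rbilinear br /\
  (forall x y : S, br x y = - br y x) /\
  (forall (f : K) (x y : S), br x (f *: y) = f *: br x y + a x f *: y) /\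
  (forall x y z : S, br x (br y z) + br y (br z x) + br z (br x y) = 0).

Definition conn_bracket (nabla : S -> S -> S) (x y : S) : S :=
  nabla x y - nabla y x.

Definition curvature (nabla : S -> S -> S) (x y z : S) : S :=
  nabla x (nabla y z) - nabla y (nabla x z) - nabla (conn_bracket nabla x y) z.

End Defs.

From HB Require Import structures.
From mathcomp Require Import all_boot all_order all_algebra.
From mathcomp Require Import reals.
Set Implicit Arguments.
Unset Strict Implicit.
Unset Printing Implicit Defensive.
Import GRing.Theory.
Local Open Scope ring_scope.

(* Skew-symmetry, R-bilinearity and the Leibniz rule of [x,y]^nabla follow
   from the connection axioms alone, so only the Jacobi identity is at stake.
   Expanding the Jacobiator of [.,.]^nabla, the terms nabla_x nabla_y z
   regroup exactly into the cyclic sum of the curvature. *)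

Section RBilinear.
Variables (R : realType) (K : comAlgType R) (S : lmodType K).

Lemma rscale1 (x : S) : rscale 1 x = x.
Proof. by rewrite /rscale scale1r scale1r. Qed.

Variable op : S -> S -> S.
Hypothesis op_bilin : rbilinear op.

Lemma rbilinear_addl (u v x : S) : op (u + v) x = op u x + op v x.
Proof. by rewrite -[u]rscale1 op_bilin.1 !rscale1. Qed.

Lemma rbilinear_addr (x u v : S) : op x (u + v) = op x u + op x v.
Proof. by rewrite -[u]rscale1 op_bilin.2 !rscale1. Qed.

Lemma rbilinear_subr (x u v : S) : op x (u - v) = op x u - op x v.
Proof. by apply/eqP; rewrite eq_sym subr_eq -rbilinear_addr subrK. Qed.

End RBilinear.

Section ConnectionBracket.
Variables (R : realType) (K : comAlgType R) (S : lmodType K).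
Variable nabla : S -> S -> S.

Lemma conn_bracketC (x y : S) :
  conn_bracket nabla x y = - conn_bracket nabla y x.
Proof. by rewrite /conn_bracket opprB. Qed.

Lemma conn_bracket_rbilinear :
  rbilinear nabla -> rbilinear (conn_bracket nabla).
Proof.
move=> [nablaDl nablaDr]; split=> c x y z; rewrite /conn_bracket.
- by rewrite nablaDl nablaDr /rscale scalerBr opprD !addrA (ACl (1*3*2*4)%AC).
- by rewrite nablaDl nablaDr /rscale scalerBr opprD !addrA (ACl (1*3*2*4)%AC).
Qed.

Lemma conn_bracket_leibniz (a : S -> K -> K) (f : K) (x y : S) :
  is_connection a nabla ->
  conn_bracket nabla x (f *: y) = f *: conn_bracket nabla x y + a x f *: y.
Proof.
move=> [_ [nablaZl nablaZr]].
by rewrite /conn_bracket nablaZl nablaZr scalerBr (ACl (2*3*1)%AC).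
Qed.

Lemma conn_bracket_jacobi_curvature (x y z : S) : rbilinear nabla ->
  conn_bracket nabla x (conn_bracket nabla y z) +
  conn_bracket nabla y (conn_bracket nabla z x) +
  conn_bracket nabla z (conn_bracket nabla x y) =
  curvature nabla x y z + curvature nabla y z x + curvature nabla z x y.
Proof.
move=> nabla_bilin; rewrite /curvature /conn_bracket !(rbilinear_subr nabla_bilin).
by rewrite !addrA (ACl (1*5*9*4*8*3*7*2*6)%AC).
Qed.

End ConnectionBracket.

Theorem proposition2p7 (R : realType) (K : comAlgType R) (S : lmodType K)
    (a : S -> K -> K) (nabla : S -> S -> S) :
  is_anchor a -> is_connection a nabla ->
  (is_lie_algebroid (conn_bracket nabla) a <->
   forall x y z : S,
     curvature nabla x y z + curvature nabla y z x + curvature nabla z x y = 0).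
Proof.
move=> _ conn; have nabla_bilin := conn.1.
split=> [[_ [_ [_ jacobi]]] x y z | bianchi].
  by rewrite -conn_bracket_jacobi_curvature // jacobi.
split; first exact: conn_bracket_rbilinear.
split; first exact: conn_bracketC.
split=> [f x y | x y z]; first exact: conn_bracket_leibniz.
by rewrite conn_bracket_jacobi_curvature // bianchi.
Qed.
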